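(* Let $R$ be a commutative noetherian domain, $\sigma\in\operatorname{Aut}_\Bbbk(R)$, $H,J$ ideals of $R$, and $B=R(t,\sigma,H,J)$. Suppose that $\sigma^n(\mathfrak p)\neq\mathfrak p$ for every maximal ideal $\mathfrak p$ of $R$ and every integer $n\neq0$. Then every two-sided ideal of $B$ is graded (i.e. generated by homogeneous elements for the $\mathbb Z$-grading $B=\bigoplus_n I^{(n)}t^n$).
   Context: $\Bbbk$ is a field; all algebras are associative unital $\Bbbk$-algebras. For an algebra $R$ and $\sigma\in\operatorname{Aut}_\Bbbk(R)$, $R[t,t^{-1};\sigma]$ is the skew Laurent ring: generated over $R$ by $t,t^{-1}$ with $tt^{-1}=t^{-1}t=1$ and $t^{\pm1}r=\sigma^{\pm1}(r)t^{\pm1}$ for $r\in R$. Given two-sided ideals $H,J$ of $R$, set $I^{(0)}=R$, $I^{(n)}=J\sigma(J)\cdots\sigma^{n-1}(J)$ for $n\ge1$, and $I^{(n)}=\sigma^{-1}(H)\sigma^{-2}(H)\cdots\sigma^{n}(H)$ for $n\le-1$; it is assumed throughout that $I^{(n)}\neq0$ for all $n\in\mathbb Z$. The Bell–Rogalski (BR) algebra is $R(t,\sigma,H,J)=\bigoplus_{n\in\mathbb Z}I^{(n)}t^n\subseteq R[t,t^{-1};\sigma]$. *)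

From HB Require Import structures.
From mathcomp Require Import all_boot all_order all_algebra.
Set Implicit Arguments. Unset Strict Implicit. Unset Printing Implicit Defensive.
Import GRing.Theory.
Local Open Scope ring_scope.

Definition is_ideal (R : comPzRingType) (P : R -> Prop) : Prop :=
  P 0 /\ (forall x y, P x -> P y -> P (x + y)) /\ (forall r x, P x -> P (r * x)).

Definition is_maximal_ideal (R : comPzRingType) (P : R -> Prop) : Prop :=
  is_ideal P /\ ~ P 1 /\
  forall Q : R -> Prop, is_ideal Q -> (forall x, P x -> Q x) ->
    (forall x, Q x -> P x) \/ Q 1.

Definition noetherian (R : comPzRingType) : Prop :=
  forall I : nat -> R -> Prop, (forall n, is_ideal (I n)) ->
    (forall n x, I n x -> I n.+1 x) ->
    exists N, forall n x, (N <= n)%N -> I n x -> I N x.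

Definition is_domain (R : comPzRingType) : Prop :=
  (1 : R) != 0 /\ forall a b : R, a * b = 0 -> a = 0 \/ b = 0.

(* sigma^z for z : int, given sigma and its inverse sigmai *)
Definition spow (R : Type) (s si : R -> R) (z : int) : R -> R :=
  match z with Posz n => iter n s | Negz n => iter n.+1 si end.

Definition img (R : Type) (f : R -> R) (P : R -> Prop) : R -> Prop :=
  fun y => exists2 x, P x & y = f x.

Definition ideal_prod (R : pzRingType) (A B : R -> Prop) : R -> Prop :=
  fun x => exists s : seq (R * R),
    (forall p, p \in s -> A p.1 /\ B p.2) /\ x = \sum_(p <- s) p.1 * p.2.

(* Jpow n = J sigma(J) ... sigma^{n-1}(J)  (Jpow 0 = R) *)
Fixpoint Jpow (R : pzRingType) (s : R -> R) (J : R -> Prop) (n : nat) : R -> Prop :=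
  match n with
  | 0 => fun _ => True
  | n'.+1 => ideal_prod (Jpow s J n') (img (iter n' s) J)
  end.

(* Hpow m = sigma^{-1}(H) ... sigma^{-m}(H)  (Hpow 0 = R) *)
Fixpoint Hpow (R : pzRingType) (si : R -> R) (H : R -> Prop) (m : nat) : R -> Prop :=
  match m with
  | 0 => fun _ => True
  | m'.+1 => ideal_prod (Hpow si H m') (img (iter m'.+1 si) H)
  end.

Definition BRI (R : pzRingType) (s si : R -> R) (H J : R -> Prop) (z : int) : R -> Prop :=
  match z with Posz n => Jpow s J n | Negz n => Hpow si H n.+1 end.

(* Elements of the skew Laurent ring R[t,t^-1;sigma] are represented by
   formal sums  sum a_i t^{n_i}, i.e. lists of pairs (n_i, a_i); the element
   they denote is the coefficient function. *)
Definition coef (R : pzRingType) (f : seq (int * R)) (n : int) : R :=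
  \sum_(p <- f | p.1 == n) p.2.

(* product:  (a t^m)(b t^n) = a sigma^m(b) t^(m+n) *)
Definition lmul (R : pzRingType) (s si : R -> R) (f g : seq (int * R)) : seq (int * R) :=
  [seq (p.1 + q.1, p.2 * spow s si p.1 q.2) | p <- f, q <- g].

(* membership in B = R(t,sigma,H,J) = (+)_n I^(n) t^n *)
Definition inBR (R : pzRingType) (s si : R -> R) (H J : R -> Prop) (f : seq (int * R)) : Prop :=
  forall n : int, BRI s si H J n (coef f n).

(* two-sided ideal of B (as a set of coefficient functions) *)
Definition is_BR_ideal (R : pzRingType) (s si : R -> R) (H J : R -> Prop)
    (A : (int -> R) -> Prop) : Prop :=
  [/\ forall F, A F -> exists2 f, F = coef f & inBR s si H J f,
      A (fun _ => 0),
      forall f g, A (coef f) -> A (coef g) -> A (coef (f ++ g)),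
      forall f, A (coef f) -> A (coef [seq (p.1, - p.2) | p <- f]) &
      forall b f, inBR s si H J b -> A (coef f) ->
        A (coef (lmul s si b f)) /\ A (coef (lmul s si f b))].

(* graded ideal: generated (as a two-sided ideal of B) by homogeneous elements
   a t^n lying in it, i.e. every element is a finite sum of b (a t^n) c. *)
Definition is_graded_BR_ideal (R : pzRingType) (s si : R -> R) (H J : R -> Prop)
    (A : (int -> R) -> Prop) : Prop :=
  forall F, A F ->
    exists l : seq (seq (int * R) * (int * R) * seq (int * R)),
      (forall t, t \in l ->
         [/\ inBR s si H J t.1.1, A (coef [:: t.1.2]) & inBR s si H J t.2]) /\
      F = coef (flatten [seq lmul s si (lmul s si t.1.1 [:: t.1.2]) t.2 | t <- l]).

From HB Require Import structures.
From mathcomp Require Import all_boot all_order all_algebra.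
From Stdlib Require Import Classical ClassicalEpsilon FunctionalExtensionality.
Set Implicit Arguments. Unset Strict Implicit.
Import GRing.Theory.
Local Open Scope ring_scope.

(* Let [A] be an ideal of [B] and [F] an element of [A] with finite support [S].
   For [r] in [R] and [n'] in [S], the element [F r - sigma^n'(r) F] of [A] has
   [n]-th coefficient [(sigma^n(r) - sigma^n'(r)) F_n] and support in [S \ n'],
   so by induction on the support the [x] with [x F_n t^n] in [A] form an ideal
   of [R] containing every [sigma^n(r) - sigma^n'(r)].  Such an ideal is all of
   [R]: otherwise, after applying [sigma^-n'], it lies in a maximal ideal [p]
   containing every [sigma^m(y) - y] with [m = n - n' <> 0], and such a [p]
   satisfies [sigma^m(p) = p].  Hence [F_n t^n] lies in [A] for every [n]. *)

Lemma iter_zmod_morphism (V : zmodType) (f : V -> V) n :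
  zmod_morphism f -> zmod_morphism (iter n f).
Proof. by move=> fB; elim: n => [//|n IH] x y; rewrite !iterS IH fB. Qed.

Lemma iter_monoid_morphism (R : pzSemiRingType) (f : R -> R) n :
  monoid_morphism f -> monoid_morphism (iter n f).
Proof.
move=> [f1 fM]; elim: n => [//|n [IH1 IHM]].
by split=> [|x y]; rewrite !iterS ?IH1 ?IHM ?f1 ?fM.
Qed.

Lemma ideal_memB (R : comPzRingType) (P : R -> Prop) x y :
  is_ideal P -> P x -> P y -> P (x - y).
Proof. by move=> [_ [PD PM]] Px Py; rewrite -mulN1r; apply/PD/PM. Qed.

Lemma ideal_preim (R S : comPzRingType) (f : {rmorphism R -> S}) (Q : S -> Prop) :
  is_ideal Q -> is_ideal (fun x => Q (f x)).
Proof.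
move=> [Q0 [QD QM]]; split; first by rewrite rmorph0.
by split=> [x y Qx Qy|r x Qx]; rewrite ?rmorphD ?rmorphM; [apply: QD | apply: QM].
Qed.

Lemma ideal_strict_ext (R : comPzRingType) (P : R -> Prop) :
  is_ideal P -> ~ P 1 -> ~ is_maximal_ideal P ->
  exists Q : R -> Prop, [/\ is_ideal Q, ~ Q 1, forall x, P x -> Q x &
                           ~ (forall x, Q x -> P x)].
Proof.
move=> Pid nP1 nPmax; apply: NNPP => noQ; apply: nPmax; do 2!split=> //.
move=> Q Qid PQ; apply: NNPP => /not_or_and [nQP nQ1].
by apply: noQ; exists Q.
Qed.

(* The strictly ascending chain contradicting the ACC is built by dependent choice. *)
Lemma noetherian_maximal_above (R : comPzRingType) (Q : R -> Prop) :
  noetherian R -> is_ideal Q -> ~ Q 1 ->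
  exists2 p, is_maximal_ideal p & forall x, Q x -> p x.
Proof.
move=> noeth Qid nQ1; apply: NNPP => noMax.
pose proper_above (P : R -> Prop) := [/\ is_ideal P, ~ P 1 & forall x, Q x -> P x].
pose T := {P : R -> Prop | proper_above P}.
have ext (P : T) : exists P' : T, (forall x, sval P x -> sval P' x) /\
                                  ~ (forall x, sval P' x -> sval P x).
  case: P => P [Pid nP1 QP] /=.
  have [|P' [P'id nP'1 PP' nP'P]] := ideal_strict_ext Pid nP1.
    by move=> Pmax; apply: noMax; exists P.
  have P'above : proper_above P' by split=> // x /QP /PP'.
  by exists (exist _ P' P'above).
pose next (P : T) : T := sval (constructive_indefinite_description _ (ext P)).
have nextP (P : T) := svalP (constructive_indefinite_description _ (ext P)).
have Qabove : proper_above Q by [].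
pose chain n := sval (iter n next (exist _ Q Qabove)).
have chain_ideal n : is_ideal (chain n).
  by case: (svalP (iter n next (exist _ Q Qabove))).
have [N chainN] := noeth chain chain_ideal (fun n => (nextP _).1).
by apply: (nextP (iter N next _)).2 => x; apply: (chainN N.+1).
Qed.

Definition separating (R : comPzRingType) (sp : int -> R -> R) : Prop :=
  forall n n' : int, n != n' -> forall Q : R -> Prop, is_ideal Q ->
    (forall r, Q (sp n r - sp n' r)) -> Q 1.

Section SkewPowers.

Variables (R : comPzRingType) (s : {rmorphism R -> R}) (si : R -> R).
Hypotheses (sK : cancel s si) (siK : cancel si s).

Lemma spow_zmod_morphism z : zmod_morphism (spow s si z).
Proof.
case: z => n /=; apply: iter_zmod_morphism; first exact: rmorphB.
exact: can2_zmod_morphism sK siK.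
Qed.

Lemma spow_monoid_morphism z : monoid_morphism (spow s si z).
Proof.
case: z => n /=; apply: iter_monoid_morphism; first exact: rmorphism_monoidP.
exact: can2_monoid_morphism sK siK.
Qed.

HB.instance Definition _ z :=
  GRing.isZmodMorphism.Build R R (spow s si z) (spow_zmod_morphism z).
HB.instance Definition _ z :=
  GRing.isMonoidMorphism.Build R R (spow s si z) (spow_monoid_morphism z).

Lemma spow1 z : spow s si z 1 = 1.
Proof. exact: rmorph1. Qed.

Lemma spowD1 z x : spow s si (z + 1) x = s (spow s si z x).
Proof.
case: z => [n|[|n]]; first by rewrite (_ : Posz n + 1 = n.+1) // -addn1 PoszD.
  by rewrite /= siK.
by rewrite (_ : Negz n.+1 + 1 = Negz n) /= ?siK // !NegzE -[n.+2]addn1 PoszD opprD subrK.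
Qed.

Lemma spowB1 z x : spow s si (z - 1) x = si (spow s si z x).
Proof. by rewrite -{2}(subrK 1 z) spowD1 sK. Qed.

Lemma spowD a b x : spow s si (a + b) x = spow s si a (spow s si b x).
Proof.
case: a => n; elim: n => [|n IH].
- by rewrite add0r.
- by rewrite (_ : Posz n.+1 + b = Posz n + b + 1) ?spowD1 ?IH // -addn1 PoszD addrAC.
- by rewrite (_ : Negz 0 + b = b - 1) ?spowB1 // addrC.
- rewrite (_ : Negz n.+1 + b = Negz n + b - 1) ?spowB1 ?IH //.
  by rewrite !NegzE -[n.+2]addn1 PoszD opprD addrAC.
Qed.

Lemma spowK m x : spow s si m (spow s si (- m) x) = x.
Proof. by rewrite -spowD subrr. Qed.

Lemma spow_img_ideal (p : R -> Prop) m :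
  is_ideal p -> (forall y, p (spow s si m y - y)) ->
  forall x, img (spow s si m) p x <-> p x.
Proof.
move=> pid pm x; have [_ [pD _]] := pid; split.
  by case=> y py ->; rewrite -(subrK y (spow s si m y)); apply: pD.
move=> px; exists (spow s si (- m) x); last by rewrite spowK.
have := ideal_memB pid px (pm (spow s si (- m) x)).
by rewrite spowK opprB addrC subrK.
Qed.

Lemma spow_separating :
  noetherian R ->
  (forall p : R -> Prop, is_maximal_ideal p -> forall n : int, n != 0 ->
     ~ (forall x, img (spow s si n) p x <-> p x)) ->
  separating (spow s si).
Proof.
move=> noeth no_stable n n' nn' Q Qid Qdiff.
pose Q' x := Q (spow s si n' x).
have Q'id : is_ideal Q' := ideal_preim (spow s si n') Qid.
have Q'diff y : Q' (spow s si (n - n') y - y).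
  by rewrite /Q' rmorphB /= -spowD [n' + _]addrC subrK.
have [Q'1|nQ'1] := classic (Q' 1); first by rewrite /Q' rmorph1 in Q'1.
have [p pmax Q'p] := noetherian_maximal_above noeth Q'id nQ'1.
exfalso; apply: (no_stable p pmax (n - n')); first by rewrite subr_eq0.
by apply: spow_img_ideal => [|y]; [case: pmax | apply/Q'p/Q'diff].
Qed.

End SkewPowers.

Lemma coef1 (R : pzRingType) (n : int) (a : R) m :
  coef [:: (n, a)] m = if n == m then a else 0.
Proof. by rewrite /coef big_cons big_nil /=; case: eqP => // _; rewrite addr0. Qed.

Lemma coef_cat (R : pzRingType) (f g : seq (int * R)) n :
  coef (f ++ g) n = coef f n + coef g n.
Proof. by rewrite /coef big_cat. Qed.

Lemma coef_opp (R : pzRingType) (f : seq (int * R)) n :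
  coef [seq (p.1, - p.2) | p <- f] n = - coef f n.
Proof. by rewrite /coef big_map sumrN. Qed.

Lemma coef_flatten (R : pzRingType) (L : seq (seq (int * R))) n :
  coef (flatten L) n = \sum_(l <- L) coef l n.
Proof.
elim: L => [|l L IH]; first by rewrite /coef !big_nil.
by rewrite /= coef_cat IH big_cons.
Qed.

Lemma coef_lmulCl (R : pzRingType) (s si : R -> R) r (f : seq (int * R)) n :
  coef (lmul s si [:: (0, r)] f) n = r * coef f n.
Proof.
rewrite /lmul /= cats0 /coef big_map mulr_sumr.
by apply: eq_big => q /=; rewrite ?add0r.
Qed.

Lemma coef_lmulCr (R : pzRingType) (s si : R -> R) r (f : seq (int * R)) n :
  coef (lmul s si f [:: (0, r)]) n = coef f n * spow s si n r.
Proof.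
rewrite /lmul coef_flatten big_map /coef mulr_suml [RHS]big_mkcond /=.
apply: eq_bigr => p _; rewrite big_cons big_nil /= addr0.
by case: eqP => [->|]; rewrite ?addr0.
Qed.

Lemma coef_notin (R : pzRingType) (f : seq (int * R)) m :
  m \notin unzip1 f -> coef f m = 0.
Proof.
move=> mf; rewrite /coef big1_seq // => p /andP[/eqP pm pf].
by move: mf; rewrite -pm (map_f fst pf).
Qed.

Lemma coef_components (R : pzRingType) (f : seq (int * R)) m :
  coef f m = \sum_(n <- undup (unzip1 f)) coef [:: (n, coef f n)] m.
Proof.
under eq_bigr do rewrite coef1.
rewrite -big_mkcond /=; have [mf|mf] := boolP (m \in undup (unzip1 f)).
  by rewrite -big_filter (@eq_filter _ _ (pred1 m)) // filter_pred1_uniq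
    ?undup_uniq // big_seq1.
rewrite big1_seq => [|n /andP[/eqP -> //]]; last by rewrite (negPf mf).
by rewrite coef_notin // -mem_undup.
Qed.

Lemma size_filter_predC1_lt (T : eqType) (x : T) (s : seq T) :
  x \in s -> (size (filter (predC1 x) s) < size s)%N.
Proof.
move=> xs; rewrite size_filter -(count_predC (predC1 x) s) -addn1 leq_add2l.
by rewrite -has_count; apply/hasP; exists x => //=; rewrite negbK.
Qed.

Lemma funext_transport (T U : Type) (P : (T -> U) -> Prop) (F G : T -> U) :
  F =1 G -> P F -> P G.
Proof. by move/functional_extensionality ->. Qed.

Section HomogeneousComponents.

Variables (R : comPzRingType) (sp : int -> R -> R) (A : (int -> R) -> Prop).
Hypotheses (A0 : A (fun _ => 0))
  (AD : forall F G, A F -> A G -> A (fun n => F n + G n))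
  (AN : forall F, A F -> A (fun n => - F n))
  (AMl : forall r F, A F -> A (fun n => r * F n))
  (AMr : forall r F, A F -> A (fun n => F n * sp n r))
  (sp_sep : separating sp).

Lemma component_ideal (n : int) (a : R) : is_ideal (fun x => A (coef [:: (n, x * a)])).
Proof.
split; [|split=> [x y Ax Ay|r x Ax]].
- by apply: funext_transport A0 => m; rewrite coef1 mul0r if_same.
- apply: funext_transport (AD Ax Ay) => m; rewrite !coef1.
  by case: eqP; rewrite ?mulrDl ?addr0.
- apply: funext_transport (AMl r Ax) => m; rewrite !coef1.
  by case: eqP; rewrite ?mulrA ?mulr0.
Qed.

Lemma component_mem (S : seq int) F :
  A F -> (forall m, m \notin S -> F m = 0) -> forall n, A (coef [:: (n, F n)]).
Proof.
have [k] := ubnP (size S); elim: k S F => // k IH S F Sk AF FS n.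
have [/hasP[n' n'S /= n'n]|] := boolP (has (predC1 n) S); last first.
  move/hasPn=> Sn; apply: funext_transport AF => m; rewrite coef1.
  case: eqP => [->//|nm]; rewrite FS //; apply/negP => /Sn /=.
  by rewrite negbK => /eqP /esym.
have twistA r : A (fun m => F m * sp m r + - (sp n' r * F m)) :=
  AD (AMr r AF) (AN (AMl (sp n' r) AF)).
have twist_supp r m : m \notin filter (predC1 n') S ->
    F m * sp m r + - (sp n' r * F m) = 0.
  rewrite mem_filter negb_and /= negbK => /orP[/eqP ->|/FS ->].
    by rewrite mulrC subrr.
  by rewrite mul0r mulr0 subrr.
have Sk' : (size (filter (predC1 n') S) < k)%N.
  exact: leq_trans (size_filter_predC1_lt n'S) Sk.
have nn' : n != n' by rewrite eq_sym.
have := sp_sep nn' (component_ideal n (F n)); rewrite mul1r; apply=> r.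
by have := IH _ _ Sk' (twistA r) (twist_supp r) n; rewrite (mulrC (F n)) -mulrBl.
Qed.

End HomogeneousComponents.

Section BRIdealClosure.

Variables (R : pzRingType) (s si : R -> R) (H J : R -> Prop).
Variable A : (int -> R) -> Prop.
Hypothesis A_ideal : is_BR_ideal s si H J A.

Lemma inBR_const (r : R) : inBR s si H J [:: (0, r)].
Proof.
move=> n; rewrite coef1; case: eqP => [<-//|_].
by case: n => [[|n]|n] //=; exists [::]; split=> //; rewrite big_nil.
Qed.

Lemma BR_ideal_coef F : A F -> exists f, F = coef f.
Proof. by move=> AF; case: A_ideal => /(_ F AF) [f -> _] *; exists f. Qed.

Lemma BR_idealD F G : A F -> A G -> A (fun n => F n + G n).
Proof.
move=> AF AG; have [[f Ff] [g Gg]] := (BR_ideal_coef AF, BR_ideal_coef AG).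
subst F G; case: A_ideal => _ _ /(_ f g AF AG) + _ _.
by apply: funext_transport => n; rewrite coef_cat.
Qed.

Lemma BR_idealN F : A F -> A (fun n => - F n).
Proof.
move=> AF; have [f Ff] := BR_ideal_coef AF; subst F.
case: A_ideal => _ _ _ /(_ f AF) + _.
by apply: funext_transport => n; rewrite coef_opp.
Qed.

Lemma BR_idealMl r F : A F -> A (fun n => r * F n).
Proof.
move=> AF; have [f Ff] := BR_ideal_coef AF; subst F.
case: A_ideal => _ _ _ _ /(_ _ f (inBR_const r) AF) [+ _].
by apply: funext_transport => n; rewrite coef_lmulCl.
Qed.

Lemma BR_idealMr r F : A F -> A (fun n => F n * spow s si n r).
Proof.
move=> AF; have [f Ff] := BR_ideal_coef AF; subst F.
case: A_ideal => _ _ _ _ /(_ _ f (inBR_const r) AF) [_].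
by apply: funext_transport => n; rewrite coef_lmulCr.
Qed.

End BRIdealClosure.

Theorem proposition2p2 (k : fieldType) (R : comAlgType k)
    (sigma : {lrmorphism R -> R}) (sigmai : R -> R) (H J : R -> Prop) :
  cancel sigma sigmai -> cancel sigmai sigma ->
  noetherian R -> is_domain R ->
  is_ideal H -> is_ideal J ->
  (forall n : int, exists2 x, BRI sigma sigmai H J n x & x != 0) ->
  (forall p : R -> Prop, is_maximal_ideal p -> forall n : int, n != 0 ->
     ~ (forall x, img (spow sigma sigmai n) p x <-> p x)) ->
  forall A : (int -> R) -> Prop,
    is_BR_ideal sigma sigmai H J A -> is_graded_BR_ideal sigma sigmai H J A.
Proof.
move=> sK siK noeth _ _ _ _ no_stable A A_ideal F AF.
have [f Ff] := BR_ideal_coef A_ideal AF; subst F.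
have sep := spow_separating sK siK noeth no_stable.
have [_ A0 _ _ _] := A_ideal.
have component n := component_mem A0
  (BR_idealD A_ideal) (BR_idealN A_ideal) (BR_idealMl A_ideal) (BR_idealMr A_ideal)
  sep AF (@coef_notin _ f) n.
exists [seq ([:: (0, 1)], (n, coef f n), [:: (0, 1)]) | n <- undup (unzip1 f)].
split=> [t /mapP[n _ ->]|].
  by split; [exact: inBR_const | exact: component | exact: inBR_const].
apply: functional_extensionality => m; rewrite coef_flatten -map_comp big_map.
rewrite [LHS]coef_components; apply: eq_bigr => n _ /=.
by rewrite coef_lmulCr coef_lmulCl mul1r spow1 // mulr1.
Qed.
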